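(* Define $f_{\mathrm{HbM}}(X)=\operatorname{diag}(|X|\mathbf{1}_n)^{-1}XX^{\top}$ and consider the dynamical system $X(t+1)=f_{\mathrm{HbM}}(X(t))$, $t\in\mathbb{Z}_{\ge0}$. Pick $X_0\in\mathcal{S}_{\mathrm{nz\text{-}row}}$. Then: (i) $f_{\mathrm{HbM}}$ is well-defined for every $X\in\mathcal{S}_{\mathrm{nz\text{-}row}}$ and maps $\mathcal{S}_{\mathrm{nz\text{-}row}}$ into $\mathcal{S}^{+}_{\mathrm{s\text{-}symm}}$; (ii) the solution $X(t)$, $t\in\mathbb{Z}_{\ge0}$, from the initial condition $X(0)=X_0$ exists and is unique; (iii) every such solution satisfies $\max_{i,j}|X_{ij}(t+1)|\le\max_{i,j}|X_{ij}(t)|\le\max_{i,j}|X_{ij}(0)|$ for all $t$; (iv) for every $c>0$, the trajectory $cX(t)$ is the solution from the initial condition $X(0)=cX_0$.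
   Context: $\mathbf{1}_n$ is the all-ones vector, $|X|$ is the entry-wise absolute value, $\operatorname{sign}$ is entry-wise sign, $X_{i*}$ is the $i$-th row. $\mathcal{S}_{\mathrm{nz\text{-}row}}=\{X\in\mathbb{R}^{n\times n}: X_{i*}\neq\mathbf{0}_n^{\top}\text{ for every }i\}$. $\mathcal{S}^{+}_{\mathrm{s\text{-}symm}}=\{X\in\mathbb{R}^{n\times n}:\operatorname{sign}(X)=\operatorname{sign}(X)^{\top}\text{ and }X_{ii}>0\text{ for every }i\}$. *)

From mathcomp Require Import all_boot all_order all_algebra.
Set Implicit Arguments. Unset Strict Implicit. Unset Printing Implicit Defensive.
Import Order.TTheory GRing.Theory Num.Theory.
Local Open Scope ring_scope.

Definition absrowsum (R : realFieldType) (n : nat) (X : 'M[R]_n) : 'cV[R]_n :=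
  map_mx Num.norm X *m const_mx 1.

Definition Dabs (R : realFieldType) (n : nat) (X : 'M[R]_n) : 'M[R]_n :=
  diag_mx (absrowsum X)^T.

Definition fHbM (R : realFieldType) (n : nat) (X : 'M[R]_n) : 'M[R]_n :=
  invmx (Dabs X) *m (X *m X^T).

Definition S_nzrow (R : realFieldType) (n : nat) (X : 'M[R]_n) : Prop :=
  forall i : 'I_n, row i X != 0.

Definition S_ssymm_pos (R : realFieldType) (n : nat) (X : 'M[R]_n) : Prop :=
  map_mx Num.sg X = (map_mx Num.sg X)^T /\ (forall i : 'I_n, 0 < X i i).

(* X : nat -> matrices is a solution of X(t+1) = f_HbM(X(t)) with X(0) = X0,
   f_HbM being applied only on its domain S_{nz-row} *)
Definition is_solution (R : realFieldType) (n : nat) (X0 : 'M[R]_n)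
  (X : nat -> 'M[R]_n) : Prop :=
  X 0%N = X0 /\ (forall t : nat, S_nzrow (X t) /\ X t.+1 = fHbM (X t)).

(* max_{i,j} |X_ij| (0 for the empty matrix) *)
Definition maxabs (R : realFieldType) (n : nat) (X : 'M[R]_n) : R :=
  \big[Num.max/0]_(ij : 'I_n * 'I_n) `|X ij.1 ij.2|.

(** Writing x_i for the rows of X, the map is entrywise
    f(X)_ij = <x_i, x_j> / |x_i|_1, and |x_i|_1 > 0 exactly when x_i != 0.
    The numerator is symmetric and the denominators positive, so f(X) is
    sign-symmetric, and its diagonal |x_i|_2^2 / |x_i|_1 is positive; in
    particular f(X) has nonzero rows again, so the iteration never leaves the
    domain and the trajectory is the unique one.  Hoelder's inequality
    |<x_i, x_j>| <= |x_i|_1 |x_j|_oo bounds every entry of f(X) by the largest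
    entry of X, and f(c X) = |c| f(X) since the numerator is quadratic and the
    denominator is homogeneous. *)

From mathcomp Require Import all_boot all_order all_algebra.
From mathcomp Require Import ring.
From Stdlib Require Import FunctionalExtensionality.
Import Order.TTheory GRing.Theory Num.Theory.
Local Open Scope ring_scope.
Set Implicit Arguments. Unset Strict Implicit.

Section DiagonalInverse.
Variables (F : fieldType) (n p : nat) (d : 'rV[F]_n).
Hypothesis d_neq0 : forall i, d 0 i != 0.

Lemma unitmx_diag : diag_mx d \in unitmx.
Proof. by rewrite unitmxE det_diag unitfE; apply/prodf_neq0 => i _. Qed.

Lemma invmx_diag_mulE (M : 'M[F]_(n, p)) i j :
  (invmx (diag_mx d) *m M) i j = M i j / d 0 i.
Proof.
have /matrixP/(_ i j) : diag_mx d *m (invmx (diag_mx d) *m M) = M.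
  by rewrite mulmxA mulmxV ?unitmx_diag ?mul1mx.
by rewrite mul_diag_mx mxE => <-; rewrite mulrAC mulfV ?mul1r.
Qed.

End DiagonalInverse.

Section GramMatrix.
Variables (R : realDomainType) (m n : nat) (A : 'M[R]_(m, n)).

Lemma gram_sym i j : (A *m A^T) i j = (A *m A^T) j i.
Proof. by rewrite -{1}(trmxK A) -trmx_mul mxE. Qed.

Lemma gram_diag_gt0 i : row i A != 0 -> 0 < (A *m A^T) i i.
Proof.
move=> /rV0Pn [j]; rewrite mxE => Aij_neq0; rewrite mxE (bigD1 j) //= mxE -expr2.
rewrite ltr_pwDl ?exprn_even_gt0 ?Aij_neq0 ?orbT // sumr_ge0 // => k _.
by rewrite mxE -expr2 sqr_ge0.
Qed.

End GramMatrix.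

Section HbMMap.
Variables (R : realFieldType) (n : nat).
Implicit Types X : 'M[R]_n.

Lemma absrowsumE X i : absrowsum X i 0 = \sum_j `|X i j|.
Proof. by rewrite mxE; apply: eq_bigr => j _; rewrite !mxE mulr1. Qed.

Lemma absrowsum_gt0 X i : row i X != 0 -> 0 < absrowsum X i 0.
Proof.
move=> /rV0Pn [j]; rewrite mxE => Xij_neq0; rewrite absrowsumE (bigD1 j) //=.
by rewrite ltr_pwDl ?normr_gt0 ?sumr_ge0.
Qed.

Lemma Dabs_unitmx X : S_nzrow X -> Dabs X \in unitmx.
Proof.
by move=> nzX; apply: unitmx_diag => i; rewrite mxE gt_eqF ?absrowsum_gt0.
Qed.

Lemma fHbME X i j : S_nzrow X ->
  fHbM X i j = (X *m X^T) i j / absrowsum X i 0.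
Proof.
move=> nzX; rewrite /fHbM invmx_diag_mulE ?mxE // => k.
by rewrite mxE gt_eqF ?absrowsum_gt0.
Qed.

Lemma fHbM_ssymm_pos X : S_nzrow X -> S_ssymm_pos (fHbM X).
Proof.
move=> nzX; split=> [|i]; last first.
  by rewrite fHbME ?divr_gt0 ?gram_diag_gt0 ?absrowsum_gt0.
apply/matrixP => i j; rewrite [LHS]mxE [RHS]mxE [RHS]mxE !fHbME //.
by rewrite !sgrM gram_sym !(gtr0_sg (x := _^-1)) ?invr_gt0 ?absrowsum_gt0.
Qed.

Lemma ssymm_pos_nzrow X : S_ssymm_pos X -> S_nzrow X.
Proof.
move=> [_ Xii_gt0] i; apply/rV0Pn; exists i.
by rewrite mxE gt_eqF ?Xii_gt0.
Qed.

Lemma maxabs_ge0 X : 0 <= maxabs X.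
Proof. exact: bigmax_ge_id. Qed.

Lemma ler_maxabs X i j : `|X i j| <= maxabs X.
Proof. exact: (le_bigmax _ _ (i, j)). Qed.

Lemma maxabs_le X M : 0 <= M -> (forall i j, `|X i j| <= M) -> maxabs X <= M.
Proof. by move=> M_ge0 XM; apply: bigmax_le => // [[i j]] _; apply: XM. Qed.

Lemma fHbM_maxabs X : S_nzrow X -> maxabs (fHbM X) <= maxabs X.
Proof.
move=> nzX; apply: maxabs_le => [|i j]; first exact: maxabs_ge0.
rewrite fHbME // normrM normfV (gtr0_norm (absrowsum_gt0 (nzX i))).
rewrite ler_pdivrMr ?absrowsum_gt0 // absrowsumE mulr_sumr mxE.
apply: le_trans (ler_norm_sum _ _ _) _; apply: ler_sum => k _.
by rewrite !mxE normrM mulrC ler_wpM2r ?ler_maxabs.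
Qed.

Lemma nzrowZ (c : R) X : c != 0 -> S_nzrow X -> S_nzrow (c *: X).
Proof.
move=> c_neq0 nzX i; have /rV0Pn [j] := nzX i; rewrite mxE => Xij_neq0.
by apply/rV0Pn; exists j; rewrite !mxE mulf_neq0.
Qed.

Lemma absrowsumZ (c : R) X i : absrowsum (c *: X) i 0 = `|c| * absrowsum X i 0.
Proof.
by rewrite !absrowsumE mulr_sumr; apply: eq_bigr => k _; rewrite mxE normrM.
Qed.

Lemma fHbMZ (c : R) X :
  c != 0 -> S_nzrow X -> fHbM (c *: X) = `|c| *: fHbM X.
Proof.
move=> c_neq0 nzX; apply/matrixP => i j; have s_gt0 := absrowsum_gt0 (nzX i).
rewrite [RHS]mxE (fHbME _ _ (nzrowZ c_neq0 nzX)) (fHbME _ _ nzX) absrowsumZ.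
have -> : ((c *: X) *m (c *: X)^T) i j = `|c| ^+ 2 * (X *m X^T) i j.
  rewrite real_normK ?num_real // !mxE mulr_sumr.
  by apply: eq_bigr => k _; rewrite !mxE; ring.
by field; rewrite normr_eq0 c_neq0 gt_eqF.
Qed.

End HbMMap.

Section Trajectories.
Variables (R : realFieldType) (n : nat) (X0 : 'M[R]_n).

Lemma iter_fHbM_solution :
  S_nzrow X0 -> is_solution X0 (fun t => iter t (@fHbM R n) X0).
Proof.
move=> nzX0; have nz t : S_nzrow (iter t (@fHbM R n) X0).
  by elim: t => //= t IH; apply/ssymm_pos_nzrow/fHbM_ssymm_pos.
by split=> // t; split.
Qed.

Lemma solution_unique X Y : is_solution X0 X -> is_solution X0 Y -> X = Y.
Proof.
move=> [X_0 X_S] [Y_0 Y_S]; apply: functional_extensionality.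
by elim=> [|t IH]; rewrite ?X_0 ?Y_0 // (X_S t).2 (Y_S t).2 IH.
Qed.

Lemma solution_maxabs_step X t :
  is_solution X0 X -> maxabs (X t.+1) <= maxabs (X t).
Proof. by move=> [_ /(_ t) [nzX ->]]; apply: fHbM_maxabs. Qed.

Lemma solution_maxabs_le_init X t :
  is_solution X0 X -> maxabs (X t) <= maxabs (X 0%N).
Proof.
move=> solX; elim: t => // t IH.
exact: le_trans (solution_maxabs_step t solX) IH.
Qed.

Lemma solution_scale c X : 0 < c -> is_solution X0 X ->
  is_solution (c *: X0) (fun t => c *: X t).
Proof.
move=> c_gt0 [X_0 X_S]; have c_neq0 : c != 0 by rewrite gt_eqF.
split=> [|t]; first by rewrite X_0.
have [nzX ->] := X_S t; split; first exact: nzrowZ.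
by rewrite fHbMZ // gtr0_norm.
Qed.

End Trajectories.

Theorem proposition3p3 (R : realFieldType) (n : nat) (X0 : 'M[R]_n) :
  S_nzrow X0 ->
  (* (i) *)
  (forall X : 'M[R]_n, S_nzrow X -> Dabs X \in unitmx /\ S_ssymm_pos (fHbM X)) /\
  (* (ii) *)
  (exists! X : nat -> 'M[R]_n, is_solution X0 X) /\
  (* (iii) *)
  (forall X : nat -> 'M[R]_n, is_solution X0 X ->
     forall t : nat, maxabs (X t.+1) <= maxabs (X t) /\ maxabs (X t) <= maxabs (X 0%N)) /\
  (* (iv) *)
  (forall (c : R) (X : nat -> 'M[R]_n), 0 < c -> is_solution X0 X ->
     is_solution (c *: X0) (fun t => c *: X t)).
Proof.
move=> nzX0; split; last split; last split.
- by move=> X nzX; split; [apply: Dabs_unitmx | apply: fHbM_ssymm_pos].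
- exists (fun t => iter t (@fHbM R n) X0); split; first exact: iter_fHbM_solution.
  by move=> X; apply: solution_unique; apply: iter_fHbM_solution.
- move=> X solX t; split; first exact: solution_maxabs_step solX.
  exact: solution_maxabs_le_init solX.
- by move=> c X; apply: solution_scale.
Qed.
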